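(* Let $Q$ be a key polynomial for $\nu$ and let $f,q,r\in K[x]$ with $f=qQ+r$ and $\gamma:=\max\{\epsilon(f),\epsilon(r)\}<\epsilon(Q)$. Then \[ \nu_Q(qQ)-(\epsilon(Q)-\gamma)\ \ge\ \nu(f)=\nu(r). \]
   Context: Let $K$ be a field and $\nu$ a rank one valuation on $K[x]$ (values in $\mathbb{R}\cup\{\infty\}$). For $f\in K[x]$ and $b\ge 0$, $\partial_bf$ denotes the $b$-th Hasse derivative of $f$ (defined by $f(x+y)=\sum_b\partial_bf(x)y^b$). For nonconstant $f$ set $\epsilon(f)=\max_{1\le b\le\deg f}\frac{\nu(f)-\nu(\partial_bf)}{b}$ (with $\epsilon(c)=-\infty$ for constants $c$). A monic $Q\in K[x]$ is a key polynomial for $\nu$ if for every $f\in K[x]$, $\epsilon(f)\ge\epsilon(Q)$ implies $\deg f\ge\deg Q$. For a monic $Q$ of degree $n\ge1$, every $f\in K[x]$ has a unique $Q$-expansion $f=\sum_{i=0}^ra_iQ^i$ with $\deg a_i<n$, and the truncation is $\nu_Q(f)=\min_i\nu(a_iQ^i)$. *)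

From HB Require Import structures.
From mathcomp Require Import all_boot all_order all_algebra.
From mathcomp Require Import reals constructive_ereal.
Set Implicit Arguments. Unset Strict Implicit. Unset Printing Implicit Defensive.
Import Order.TTheory GRing.Theory Num.Theory.
Local Open Scope ring_scope.
Local Open Scope ereal_scope.

Section Defs.
Variables (K : fieldType) (R : realType).

Definition is_valuation (nu : {poly K} -> \bar R) : Prop :=
  [/\ (forall f, nu f = +oo <-> f = 0%R),
      (forall f, nu f <> -oo),
      (forall f g, nu (f * g)%R = nu f + nu g) &
      (forall f g, mine (nu f) (nu g) <= nu (f + g)%R)].

(* Hasse derivative: nderivn b f is the b-th Hasse derivative of f
   (coefficients f_{b+i} * C(b+i, b)). *)
Definition hasse (b : nat) (f : {poly K}) : {poly K} := nderivn b f.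

Definition epsilon (nu : {poly K} -> \bar R) (f : {poly K}) : \bar R :=
  \big[maxe/-oo]_(1 <= b < size f)
     ((nu f - nu (hasse b f)) * ((b%:R : R)^-1)%:E).

Definition key_polynomial (nu : {poly K} -> \bar R) (Q : {poly K}) : Prop :=
  Q \is monic /\
  forall f : {poly K}, epsilon nu Q <= epsilon nu f -> (size Q <= size f)%N.

(* i-th coefficient of the Q-expansion f = sum_i a_i Q^i, deg a_i < deg Q *)
Definition Qexp_coef (Q f : {poly K}) (i : nat) : {poly K} :=
  ((f %/ Q ^+ i) %% Q)%R.

Definition truncation (nu : {poly K} -> \bar R) (Q f : {poly K}) : \bar R :=
  \big[mine/+oo]_(i < size f) nu (Qexp_coef Q f i * Q ^+ i)%R.

End Defs.

From HB Require Import structures.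
From mathcomp Require Import all_boot all_order all_algebra.
From mathcomp Require Import reals constructive_ereal.
From mathcomp Require Import ring lra zify.
Import Order.TTheory GRing.Theory Num.Theory.
Set Implicit Arguments. Unset Strict Implicit. Unset Printing Implicit Defensive.
Local Open Scope ring_scope.

(* Put e = epsilon(Q) and compare the points (k, nu(∂_k h)) of a polynomial h
   with the lines k |-> c - k e.  By definition of epsilon, Q lies above the line
   through (0, nu Q) and meets it last at some d >= 1, while every a with
   deg a < deg Q lies strictly above its line for k >= 1.  The Leibniz rule makes
   these profiles multiply, so each term a_i Q^i of the Q-expansion of g = q Q
   meets its line last at i d.  Taking i maximal among the terms of value
   delta = nu_Q(g) (and i >= 1 since a_0 = 0) isolates one term at k = i d, so
   nu(∂_k g) = delta - k e for some k >= 1.  On the other hand g = f - r, and with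
   c = min(nu f, nu r) the definition of epsilon gives nu(∂_k g) >= c - k gamma.
   Hence c + k (e - gamma) <= delta <= nu(f - r), which forces nu f = nu r = c and
   yields the inequality since k >= 1. *)

Section HasseDerivatives.
Variable K : fieldType.
Implicit Types p q : {poly K}.

(* p(x + y), as a polynomial in y with coefficients in K[x]. *)
Definition taylor p : {poly {poly K}} :=
  (map_poly polyC (map_poly polyC p)).['X%:P + 'X].

Lemma coef_taylor p i : (taylor p)`_i = hasse i p.
Proof.
have -> : taylor p = \poly_(j < size p) hasse j p.
  rewrite /taylor nderiv_taylor; last exact: mulrC.
  rewrite !size_map_polyC poly_def; apply: eq_bigr => j _.
  rewrite !nderivn_map horner_map /= mul_polyC; congr (_ *: _).
  exact: comp_polyXr.
by rewrite coef_poly; case: ltnP => // /nderivn_poly0.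
Qed.

Lemma hasseM p q k :
  hasse k (p * q) = \sum_(i < k.+1) hasse i p * hasse (k - i) q.
Proof.
have taylorM : taylor (p * q) = taylor p * taylor q.
  by rewrite /taylor !rmorphM /= hornerM.
by rewrite -coef_taylor taylorM coefM; apply: eq_bigr => i _; rewrite !coef_taylor.
Qed.

Lemma hasseB p q k : hasse k (p - q) = hasse k p - hasse k q.
Proof. exact: nderivnB. Qed.

Lemma hasse0 p : hasse 0 p = p.
Proof. exact: nderivn0. Qed.

Lemma hasse_small p k : (size p <= k)%N -> hasse k p = 0.
Proof. exact: nderivn_poly0. Qed.

End HasseDerivatives.

Section QExpansion.
Variables (K : fieldType) (Q : {poly K}).
Implicit Types f : {poly K}.

Lemma Qexpansion_partial f n :
  f = \sum_(i < n) Qexp_coef Q f i * Q ^+ i + (f %/ Q ^+ n) * Q ^+ n.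
Proof.
elim: n => [|n IH]; first by rewrite big_ord0 add0r expr0 divp1 mulr1.
rewrite {1}IH big_ord_recr /= -addrA; congr (_ + _).
rewrite {1}(divp_eq (f %/ Q ^+ n) Q) divp_divl mulrDl -mulrA -exprSr.
by rewrite addrC exprS.
Qed.

Lemma Qexpansion f : (1 < size Q)%N ->
  f = \sum_(i < size f) Qexp_coef Q f i * Q ^+ i.
Proof.
move=> Q_gt1; rewrite {1}(Qexpansion_partial f (size f)).
have [->|f_neq0] := eqVneq f 0; first by rewrite size_poly0 big_ord0 div0p mul0r addr0.
rewrite divp_small ?mul0r ?addr0 //.
have Qn_neq0 : Q ^+ size f != 0 by rewrite expf_neq0 // -size_poly_gt0 ltnW.
by rewrite (polySpred Qn_neq0) ltnS size_exp leq_pmull // -subn1 subn_gt0.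
Qed.
End QExpansion.

Local Open Scope ereal_scope.

Section Lines.
Variable R : realType.

Definition line (e c : R) (k : nat) : \bar R := (c - k%:R * e)%R%:E.

Lemma line0 e c : line e c 0 = c%:E.
Proof. by rewrite /line mul0r subr0. Qed.

Lemma lineD e c1 c2 i k : (i <= k)%N ->
  line e c1 i + line e c2 (k - i) = line e (c1 + c2) k.
Proof. by move=> le_ik; rewrite /line -EFinD natrB // mulrBl; congr EFin; ring. Qed.

Lemma slope_le_line (c x : R) (w : \bar R) k : (0 < k)%N -> w != -oo ->
  ((c%:E - w) * ((k%:R)^-1)%:E <= x%:E) = (line x c k <= w).
Proof.
case: w => [w||] // k0 _; last first.
  by rewrite leey /= mulNyr gtr0_sg ?invr_gt0 ?ltr0n // mul1e leNye.
rewrite -EFinD -EFinM !lee_fin ler_pdivrMr ?ltr0n //.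
by apply/idP/idP => H; lra.
Qed.

Lemma slope_lt_line (c x : R) (w : \bar R) k : (0 < k)%N -> w != -oo ->
  ((c%:E - w) * ((k%:R)^-1)%:E < x%:E) = (line x c k < w).
Proof.
case: w => [w||] // k0 _; last first.
  by rewrite ltry /= mulNyr gtr0_sg ?invr_gt0 ?ltr0n // mul1e ltNyr.
rewrite -EFinD -EFinM !lte_fin ltr_pdivrMr ?ltr0n //.
by apply/idP/idP => H; lra.
Qed.

Lemma line_le_gap (gamma : \bar R) (c delta e : R) k : (0 < k)%N ->
  gamma < e%:E -> (forall y : R, gamma <= y%:E -> line y c k <= line e delta k) ->
  c%:E + (e%:E - gamma) <= delta%:E /\ (c < delta)%R.
Proof.
move=> k0; have k_ge1 : (1 <= k%:R :> R)%R by rewrite ler1n.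
case: gamma => [y||] // lt_ye le_lines.
  have := le_lines y (lexx _); rewrite lee_fin -EFinB -EFinD lee_fin.
  by rewrite lte_fin in lt_ye; split; nra.
(* gamma = -oo: the slope y may be taken arbitrarily negative. *)
have := le_lines (e - 1)%R (leNye _).
have := le_lines (e - (delta - c) - 1)%R (leNye _).
by rewrite !lee_fin => ? ?; exfalso; nra.
Qed.

End Lines.

Section Valuation.
Variables (K : fieldType) (R : realType) (nu : {poly K} -> \bar R).
Hypothesis nu_val : is_valuation nu.
Implicit Types a f g h : {poly K}.

Lemma nu_eqy h : (nu h == +oo) = (h == 0%R).
Proof. by case: nu_val => nu_y _ _ _; apply/eqP/eqP => /nu_y. Qed.

Lemma nu0 : nu 0%R = +oo.
Proof. by apply/eqP; rewrite nu_eqy. Qed.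

Lemma nu_fin h : h != 0%R -> exists c : R, nu h = c%:E.
Proof.
case: nu_val => _ nu_Ny _ _; rewrite -nu_eqy; have := nu_Ny h.
by case: (nu h) => // c; exists c.
Qed.

Lemma nuM f g : nu (f * g)%R = nu f + nu g.
Proof. by case: nu_val => _ _ ->. Qed.

Lemma nuD f g : mine (nu f) (nu g) <= nu (f + g)%R.
Proof. by case: nu_val. Qed.

Lemma nu_neqNy h : nu h != -oo.
Proof. by case: nu_val => _ nu_Ny _ _; apply/eqP. Qed.

Lemma nu_unit_sqr h : (h * h = 1)%R -> nu h = 0.
Proof.
move=> hh1; have h_neq0 : h != 0%R.
  by apply: contra_eq_neq hh1 => ->; rewrite mul0r eq_sym oner_eq0.
have [c Ec] := nu_fin h_neq0; have [d Ed] := nu_fin (oner_neq0 {poly K}).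
have := nuM 1 1; rewrite mulr1 Ed -EFinD => -[d0].
have := nuM h h; rewrite hh1 Ec Ed -EFinD => -[hc].
by congr EFin; lra.
Qed.

Lemma nu1 : nu 1%R = 0.
Proof. by rewrite nu_unit_sqr ?mulr1. Qed.

Lemma nuN h : nu (- h)%R = nu h.
Proof. by rewrite -mulN1r nuM nu_unit_sqr ?add0e // mulrNN mulr1. Qed.

Lemma nuB f g : mine (nu f) (nu g) <= nu (f - g)%R.
Proof. by rewrite -(nuN g) nuD. Qed.

Lemma nuD_lt f g : nu f < nu g -> nu (f + g)%R = nu f.
Proof.
move=> lt_fg; apply/eqP; rewrite eq_le; apply/andP; split; last first.
  by have := nuD f g; rewrite /Order.min lt_fg.
have := nuB (f + g)%R g; rewrite addrK ge_min => /orP[//|le_g].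
by move: lt_fg; rewrite ltNge le_g.
Qed.

Lemma nuB_neq f g : nu f != nu g -> nu (f - g)%R = mine (nu f) (nu g).
Proof.
case: ltgtP => // [lt_fg|lt_gf] _; first by rewrite nuD_lt ?nuN.
by rewrite addrC nuD_lt nuN // -(nuN g).
Qed.

Lemma nu_minB_fin f g :
  (f - g)%R != 0%R -> exists c : R, mine (nu f) (nu g) = c%:E.
Proof.
move=> /nu_fin[cg Eg]; have := nuB f g; rewrite Eg.
have : -oo < mine (nu f) (nu g) by rewrite lt_min !ltNye !nu_neqNy.
by case: (mine _ _) => // c _ _; exists c.
Qed.

Lemma nuX h c n : nu h = c%:E -> nu (h ^+ n)%R = (n%:R * c)%:E.
Proof.
move=> Ec; elim: n => [|n IH].
  by rewrite expr0 mul0r nu1.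
by rewrite exprS nuM IH Ec -EFinD mulrSr mulrDl mul1r addrC.
Qed.

Lemma nu_sum_ge (I : Type) (r : seq I) (P : pred I) (F : I -> {poly K}) x :
  (forall i, P i -> x <= nu (F i)) -> x <= nu (\sum_(i <- r | P i) F i)%R.
Proof.
move=> le_xF; apply: (big_ind (fun y => x <= nu y)) => //; first by rewrite nu0 leey.
by move=> a b xa xb; apply: le_trans (nuD a b); rewrite le_min xa xb.
Qed.

Lemma nu_sum_gt (I : Type) (r : seq I) (P : pred I) (F : I -> {poly K}) (x : R) :
  (forall i, P i -> x%:E < nu (F i)) -> x%:E < nu (\sum_(i <- r | P i) F i)%R.
Proof.
move=> lt_xF; apply: (big_ind (fun y => x%:E < nu y)) => //; first by rewrite nu0 ltry.
by move=> a b xa xb; apply: lt_le_trans (nuD a b); rewrite lt_min xa xb.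
Qed.

Lemma nu_sum_eq (I : finType) (F : I -> {poly K}) j (x : R) :
  nu (F j) = x%:E -> (forall i, i != j -> x%:E < nu (F i)) ->
  nu (\sum_i F i)%R = x%:E.
Proof. by move=> Fj lt_xF; rewrite (bigD1 j) //= nuD_lt // Fj nu_sum_gt. Qed.

Definition slope h b := (nu h - nu (hasse b h)) * ((b%:R : R)^-1)%:E.

Lemma slope_le_epsilon h b : (0 < b < size h)%N -> slope h b <= epsilon nu h.
Proof. by move=> hb; apply: le_bigmax_seq; rewrite ?mem_index_iota. Qed.

Lemma slope_leP h c x b : nu h = c%:E -> (0 < b)%N ->
  (slope h b <= x%:E) = (line x c b <= nu (hasse b h)).
Proof. by move=> Ec b0; rewrite /slope Ec slope_le_line ?nu_neqNy. Qed.

Lemma slope_ltP h c x b : nu h = c%:E -> (0 < b)%N ->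
  (slope h b < x%:E) = (line x c b < nu (hasse b h)).
Proof. by move=> Ec b0; rewrite /slope Ec slope_lt_line ?nu_neqNy. Qed.

Lemma epsilon_small h : (size h <= 1)%N -> epsilon nu h = -oo.
Proof. by move=> h_small; rewrite /epsilon big_geq. Qed.

Lemma size_gt1_epsilon_fin h e : epsilon nu h = e%:E -> (1 < size h)%N.
Proof.
by move=> eps_h; rewrite ltnNge; apply/negP => /epsilon_small; rewrite eps_h.
Qed.

Lemma epsilon_lt_pinfty h : h != 0%R -> epsilon nu h < +oo.
Proof.
move=> /nu_fin[c Ec]; rewrite /epsilon big_seq.
apply: (big_ind (fun x => x < +oo)) => // [x y|b].
  by rewrite gt_max => -> ->.
rewrite mem_index_iota /slope Ec => /andP[b0 _].
have := nu_neqNy (hasse b h); case: (nu (hasse b h)) => [w||] // _.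
  by rewrite -EFinD -EFinM ltry.
by rewrite /= mulNyr gtr0_sg ?invr_gt0 ?ltr0n // mul1e ltNye.
Qed.

Lemma epsilon_fin h x :
  h != 0%R -> x < epsilon nu h -> exists e : R, epsilon nu h = e%:E.
Proof.
move=> /epsilon_lt_pinfty; case: (epsilon nu h) => [e _ _|//|_]; first by exists e.
by rewrite ltNge leNye.
Qed.

Lemma exists_slope_eq_epsilon h : (1 < size h)%N ->
  exists2 b, (0 < b < size h)%N & slope h b = epsilon nu h.
Proof.
move=> h_gt1; rewrite /epsilon big_geq_mkord.
have [b b1 ->] := eq_bigmax (Ordinal h_gt1)
  (fun i : 'I_(size h) => true && (0 < i)%N) (fun i => slope h i) isT
  (fun i _ => leNye _).
by exists b; rewrite // ltn_ord andbT.
Qed.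

Definition above_line e c h := forall k, line e c k <= nu (hasse k h).

Definition above_line_after e t c h :=
  forall k, (t < k)%N -> line e c k < nu (hasse k h).

Definition last_contact e t c h :=
  [/\ above_line e c h, above_line_after e t c h & nu (hasse t h) = line e c t].

Lemma above_line_epsilon h c x :
  c%:E <= nu h -> epsilon nu h <= x%:E -> above_line x c h.
Proof.
move=> le_c le_eps [|k]; first by rewrite line0 hasse0.
have [le_hk|lt_kh] := leqP (size h) k.+1; first by rewrite hasse_small // nu0 leey.
have [c' Ec'] : exists c', nu h = c'%:E.
  by apply: nu_fin; rewrite -size_poly_gt0 (ltn_trans _ lt_kh).
apply: le_trans (_ : line x c' k.+1 <= _).
  by rewrite lee_fin lerD2r -lee_fin -Ec'.
by rewrite -slope_leP // (le_trans _ le_eps) // slope_le_epsilon.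
Qed.

Lemma above_line_subr f g c x : c%:E <= mine (nu f) (nu g) ->
  maxe (epsilon nu f) (epsilon nu g) <= x%:E -> above_line x c (f - g).
Proof.
rewrite le_min ge_max => /andP[le_cf le_cg] /andP[le_f le_g] k.
rewrite hasseB; apply: le_trans (nuB _ _).
by rewrite le_min (above_line_epsilon le_cf le_f) (above_line_epsilon le_cg le_g).
Qed.

Lemma above_line_after_epsilon h c x :
  nu h = c%:E -> epsilon nu h < x%:E -> above_line_after x 0 c h.
Proof.
move=> Ec lt_eps k k0; have [le_hk|lt_kh] := leqP (size h) k.
  by rewrite hasse_small // nu0 ltry.
by rewrite -slope_ltP // (le_lt_trans _ lt_eps) // slope_le_epsilon ?k0.
Qed.

Lemma last_contact_epsilon_lt h c e :
  nu h = c%:E -> epsilon nu h < e%:E -> last_contact e 0 c h.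
Proof.
move=> Ec lt_eps; split; last by rewrite hasse0 line0.
  by apply: above_line_epsilon; rewrite ?Ec // ltW.
exact: above_line_after_epsilon.
Qed.

Lemma epsilon_last_contact h c e : (1 < size h)%N ->
  nu h = c%:E -> epsilon nu h = e%:E -> exists2 d, (0 < d)%N & last_contact e d c h.
Proof.
move=> h_gt1 Ec eps_h.
pose P b := (0 < b < size h)%N && (slope h b == e%:E).
have [b0 hb0 Eb0] := exists_slope_eq_epsilon h_gt1.
have P_bounded b : P b -> (b <= size h)%N by case/andP=> /andP[_ /ltnW].
have [|d /andP[/andP[d0 lt_dh] /eqP slope_d] d_max] := ex_maxnP _ P_bounded.
  by exists b0; rewrite /P hb0 Eb0 eps_h eqxx.
exists d => //; split.
- by apply: above_line_epsilon; rewrite ?Ec ?eps_h.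
- move=> k lt_dk; have k0 : (0 < k)%N by apply: leq_ltn_trans lt_dk.
  have [le_hk|lt_kh] := leqP (size h) k; first by rewrite hasse_small // nu0 ltry.
  rewrite -slope_ltP // lt_neqAle -eps_h slope_le_epsilon ?k0 // andbT eps_h.
  apply: contraTneq lt_dk => slope_k; rewrite -leqNgt d_max //.
  by rewrite /P k0 lt_kh slope_k eqxx.
- apply/eqP; rewrite eq_le leNgt -slope_ltP // -slope_leP // slope_d.
  by rewrite ltxx lexx.
Qed.

Lemma last_contactM e t1 t2 c1 c2 g h :
  last_contact e t1 c1 g -> last_contact e t2 c2 h ->
  last_contact e (t1 + t2) (c1 + c2) (g * h).
Proof.
move=> [g_above g_after g_t] [h_above h_after h_t].
have lineE k (i : 'I_k.+1) : line e (c1 + c2) k = line e c1 i + line e c2 (k - i).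
  by rewrite lineD // -ltnS.
have term_ge k (i : 'I_k.+1) :
    line e (c1 + c2) k <= nu (hasse i g * hasse (k - i) h)%R.
  by rewrite nuM (lineE k i) leeD.
have term_gt k (i : 'I_k.+1) : (t1 < i)%N || (t2 < k - i)%N ->
    line e (c1 + c2) k < nu (hasse i g * hasse (k - i) h)%R.
  rewrite nuM (lineE k i) => /orP[lt_t1|lt_t2].
    by apply: lte_leD; rewrite ?g_after.
  by apply: lee_ltD; rewrite ?h_after.
split.
- by move=> k; rewrite hasseM; apply: nu_sum_ge => i _; apply: term_ge.
- move=> k lt_tk; rewrite hasseM; apply: nu_sum_gt => i _; apply: term_gt.
  have := ltn_ord i; lia.
- have t1_lt : (t1 < (t1 + t2).+1)%N by rewrite ltnS leq_addr.
  rewrite hasseM; apply: (nu_sum_eq (j := Ordinal t1_lt)) => [|i ne_it].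
    by rewrite /= nuM addKn g_t h_t /line -EFinD natrD; congr EFin; ring.
  apply: term_gt.
  have {ne_it} : nat_of_ord i != t1.
    by apply: contraNneq ne_it => eq_it; apply/eqP/val_inj.
  have := ltn_ord i; lia.
Qed.

Lemma last_contact1 e : last_contact e 0 0 1%R.
Proof.
apply: last_contact_epsilon_lt; first exact: nu1.
by rewrite epsilon_small ?size_poly1 ?ltNyr.
Qed.

Lemma last_contactX e t c h n :
  last_contact e t c h -> last_contact e (n * t) (n%:R * c) (h ^+ n)%R.
Proof.
move=> h_contact; elim: n => [|n IH].
  by rewrite mul0n mul0r expr0; apply: last_contact1.
by rewrite exprS mulSn mulrS mulrDl mul1r; apply: last_contactM.
Qed.

Lemma truncation_le_nu (Q : {poly K}) g :
  (1 < size Q)%N -> truncation nu Q g <= nu g.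
Proof.
move=> Q_gt1; rewrite {2}(Qexpansion g Q_gt1).
by apply: nu_sum_ge => i _; apply: bigmin_le.
Qed.

Section KeyPolynomial.
Variables (Q : {poly K}) (e : R).
Hypotheses (Q_key : key_polynomial nu Q) (eps_Q : epsilon nu Q = e%:E).

Lemma epsilon_lt_key a : (size a < size Q)%N -> epsilon nu a < e%:E.
Proof.
case: Q_key => _ Q_min a_small; rewrite -eps_Q ltNge.
by apply/negP => /Q_min; rewrite leqNgt a_small.
Qed.

Lemma last_contact_Qmonomial a i d cQ c : (size a < size Q)%N ->
  nu Q = cQ%:E -> last_contact e d cQ Q -> nu (a * Q ^+ i)%R = c%:E ->
  last_contact e (i * d) c (a * Q ^+ i)%R.
Proof.
move=> a_small EQ Q_contact Ec.
have a_neq0 : a != 0%R by apply: contra_eq_neq Ec => ->; rewrite mul0r nu0.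
have [ca Ea] := nu_fin a_neq0.
have -> : c = (ca + i%:R * cQ)%R by move: Ec; rewrite nuM Ea (nuX _ EQ) -EFinD => -[].
rewrite -[(i * d)%N]add0n; apply: last_contactM; last exact: last_contactX.
exact/last_contact_epsilon_lt/epsilon_lt_key.
Qed.

Lemma hasse_multiple_key g : g != 0%R -> Q %| g ->
  exists2 k, (0 < k)%N &
  exists2 delta : R, truncation nu Q g = delta%:E & nu (hasse k g) = line e delta k.
Proof.
move=> g_neq0 Q_dvd_g; have Q_gt1 := size_gt1_epsilon_fin eps_Q.
have [cQ EQ] : exists cQ, nu Q = cQ%:E.
  by apply: nu_fin; rewrite -size_poly_gt0 ltnW.
have [d d0 Q_contact] := epsilon_last_contact Q_gt1 EQ eps_Q.
pose N := size g; pose T i := (Qexp_coef Q g i * Q ^+ i)%R.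
have T_contact i c : nu (T i) = c%:E -> last_contact e (i * d) c (T i).
  apply: last_contact_Qmonomial EQ Q_contact.
  by rewrite ltn_modpN0 // -size_poly_gt0 ltnW.
have N0 : (0 < N)%N by rewrite size_poly_gt0.
have [i0 _ trunc_i0] :=
  eq_bigmin (Ordinal N0) xpredT (fun i : 'I_N => nu (T i)) isT (fun i _ => leey _).
have [delta Edelta] : exists delta : R, nu (T i0) = delta%:E.
  have [cg Eg] := nu_fin g_neq0; have := truncation_le_nu g Q_gt1.
  rewrite /truncation trunc_i0 Eg; have := nu_neqNy (T i0).
  by case: (nu (T i0)) => // delta; exists delta.
have delta_le (i : 'I_N) : delta%:E <= nu (T i).
  by rewrite -Edelta -trunc_i0; apply: bigmin_le.
(* The last term of value delta is the only one on the line at k = m d. *)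
pose P i := (i < N)%N && (nu (T i) == delta%:E).
have P_bounded i : P i -> (i <= N)%N by case/andP => /ltnW.
have [|m /andP[lt_mN /eqP Em] m_max] := ex_maxnP _ P_bounded.
  by exists i0; rewrite /P ltn_ord Edelta eqxx.
have m0 : (0 < m)%N.
  rewrite lt0n; apply: contra_eq_neq Em => ->.
  by rewrite /T /Qexp_coef expr0 divp1 (eqP Q_dvd_g) mul0r nu0.
exists (m * d)%N; first by rewrite muln_gt0 m0.
exists delta; first by rewrite /truncation trunc_i0.
rewrite {1}(Qexpansion g Q_gt1) /hasse raddf_sum.
apply: (nu_sum_eq (j := Ordinal lt_mN)) => [|i ne_im].
  by case: (T_contact _ _ Em).
have {}ne_im : nat_of_ord i != m.
  by apply: contraNneq ne_im => eq_im; apply/eqP/val_inj.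
rewrite -/(T i); have [->|Ti_neq0] := eqVneq (T i) 0%R.
  by rewrite raddf0 nu0 ltry.
have [ci Eci] := nu_fin Ti_neq0.
have [above after _] := T_contact _ _ Eci.
have := delta_le i; rewrite Eci lee_fin le_eqVlt => /orP[/eqP eq_ci|lt_ci].
- rewrite -eq_ci in after; apply: after; rewrite ltn_pmul2r //.
  by rewrite ltn_neqAle ne_im m_max // /P ltn_ord Eci eq_ci eqxx.
- by apply: lt_le_trans (above _); rewrite lte_fin ltrD2r.
Qed.

End KeyPolynomial.
End Valuation.

Local Close Scope ereal_scope.

Theorem lemma2p1 (K : fieldType) (R : realType) (nu : {poly K} -> \bar R)
  (Q f q r : {poly K}) :
  is_valuation nu -> key_polynomial nu Q -> f = q * Q + r ->
  (maxe (epsilon nu f) (epsilon nu r) < epsilon nu Q)%E ->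
  (nu f + (epsilon nu Q - maxe (epsilon nu f) (epsilon nu r))
     <= truncation nu Q (q * Q))%E /\ nu f = nu r.
Proof.
move=> nu_val Q_key f_eq lt_gamma; set gamma := maxe _ _ in lt_gamma *.
have Q_neq0 : Q != 0 by case: Q_key => /monic_neq0.
have [e eps_Q] := epsilon_fin nu_val Q_neq0 lt_gamma.
rewrite eps_Q in lt_gamma *.
have [qQ0|g_neq0] := eqVneq (q * Q) 0.
  move: f_eq; rewrite qQ0 add0r => ->.
  by rewrite /truncation size_poly0 big_ord0 leey.
have [k k0 [delta trunc_g hasse_g]] :=
  hasse_multiple_key nu_val Q_key eps_Q g_neq0 (dvdp_mull q (dvdpp Q)).
have g_eq : q * Q = f - r by rewrite f_eq addrK.
rewrite g_eq in g_neq0 trunc_g hasse_g *.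
have [c Ec] := nu_minB_fin nu_val g_neq0.
have lines y : (gamma <= y%:E -> line y c k <= line e delta k)%E.
  by move=> le_gamma_y; rewrite -hasse_g; apply: above_line_subr; rewrite ?Ec.
have [gap lt_c_delta] := line_le_gap k0 lt_gamma lines.
have nu_fr : nu f = nu r.
  apply/eqP/negP => /negP ne_fr.
  have := truncation_le_nu nu_val (f - r) (size_gt1_epsilon_fin eps_Q).
  by rewrite trunc_g nuB_neq // Ec lee_fin leNgt lt_c_delta.
have Ef : nu f = c%:E by rewrite -Ec -nu_fr minxx.
by split; rewrite // trunc_g Ef.
Qed.
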